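(* Let $(x(t),y(t))$ be any solution of the system (FHN-CNN) and set $V_i=x_i-x_{i-1}$, $W_i=y_i-y_{i-1}$ for $1\le i\le n$ (with $x_0=x_n$, $y_0=y_n$). Then for all $t>0$, $$\frac{d}{dt}\sum_{i=1}^n\big(|V_i|^2+|W_i|^2\big)+2\delta\sum_{i=1}^n\big(|V_i|^2+|W_i|^2\big)+4p(x_n-x_1)^2\le 2\sum_{i=1}^n\Big[(\delta+\gamma)|V_i|^2+|c-b|\big(|V_i|^2+|W_i|^2\big)\Big]+2p(x_{n-1}-x_2)^2.$$
   Context: Fix an integer $n\ge 4$ and positive constants $a,b,c,\delta,p$. Let $f\in C^1(\mathbb{R},\mathbb{R})$ satisfy, for some positive constants $\lambda,\beta,\gamma$: $f(s)s\le -\lambda s^4+\beta$ and $f'(s)\le\gamma$ for all $s\in\mathbb{R}$. The FitzHugh–Nagumo cellular neural network with boundary feedback (FHN-CNN) is the ODE system for $t>0$, $1\le i\le n$: $$\frac{dx_i}{dt}=a(x_{i-1}-2x_i+x_{i+1})+f(x_i)-by_i+pu_i,\qquad \frac{dy_i}{dt}=cx_i-\delta y_i,$$ with the periodic convention $x_0=x_n$, $x_{n+1}=x_1$, and the boundary feedback $u_1=u_{n+1}=x_n-x_1$, $u_i=0$ for $2\le i\le n-1$, $u_n=u_0=x_1-x_n$. *)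

From Stdlib Require Import Reals Lra.
From Coquelicot Require Import Coquelicot.
Open Scope R_scope.

(* Cells are indexed by i = 1..n (x : nat -> R -> R, only indices 1..n matter).
   Periodic convention: index 0 means n, index n+1 means 1. *)
Definition pidx (n i : nat) : nat :=
  if Nat.eqb i 0 then n else if Nat.eqb i (S n) then 1%nat else i.

Definition per (n : nat) (z : nat -> R -> R) (i : nat) (t : R) : R :=
  z (pidx n i) t.

Definition ufb (n : nat) (x : nat -> R -> R) (i : nat) (t : R) : R :=
  if Nat.eqb i 1 then x n t - x 1%nat t
  else if Nat.eqb i n then x 1%nat t - x n t
  else 0.

Definition fhn_nonlinearity (f : R -> R) (lam beta gam : R) : Prop :=
  0 < lam /\ 0 < beta /\ 0 < gam /\
  (forall s, ex_derive f s) /\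
  (forall s, continuous (Derive f) s) /\
  (forall s, f s * s <= - lam * s ^ 4 + beta) /\
  (forall s, Derive f s <= gam).

Definition fhn_cnn_solution (n : nat) (a b c delta p : R) (f : R -> R)
    (x y : nat -> R -> R) : Prop :=
  forall i t, (1 <= i <= n)%nat -> 0 < t ->
    is_derive (x i) t
      (a * (per n x (i - 1) t - 2 * x i t + per n x (i + 1) t)
       + f (x i t) - b * y i t + p * ufb n x i t)
    /\ is_derive (y i) t (c * x i t - delta * y i t).

Definition Vd (n : nat) (x : nat -> R -> R) (i : nat) (t : R) : R :=
  x i t - per n x (i - 1) t.

Definition energy (n : nat) (x y : nat -> R -> R) (t : R) : R :=
  sum_n_m (fun i => Rabs (Vd n x i t) ^ 2 + Rabs (Vd n y i t) ^ 2) 1 n.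

From Stdlib Require Import Reals Lra Lia.
From Coquelicot Require Import Coquelicot.
Open Scope R_scope.

(* Differentiating the energy E = sum_i (V_i^2 + W_i^2) gives
   sum_i 2 V_i (x_i' - x_{i-1}') + 2 W_i (y_i' - y_{i-1}'), and the right-hand side
   of the system splits this into three contributions:
   - diffusion: by cyclic summation by parts it equals -2a sum_i (V_{i+1} - V_i)^2 <= 0;
   - boundary feedback: u vanishes except at cells 1 and n, so after summation by
     parts it is the explicit quadratic form 2p (d e - 3 d^2), with d = x_1 - x_n
     and e = x_2 - x_{n-1};
   - reaction: termwise, the mean value theorem (f' <= gam) and 2|VW| <= V^2 + W^2
     bound it, together with the damping 2 delta E, by the right-hand side. *)

Lemma sum_1_last (u : nat -> R) (m : nat) :
  sum_n_m u 1 (S m) = sum_n_m u 1 m + u (S m).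
Proof. apply (sum_n_Sm u 1 m); lia. Qed.

Lemma sum_1_first (u : nat -> R) (m : nat) :
  (1 <= m)%nat -> sum_n_m u 1 m = u 1%nat + sum_n_m u 2 m.
Proof. intros Hm; apply (sum_Sn_m u 1 m); lia. Qed.

Lemma sum_n_m_le_loc (u v : nat -> R) (k m : nat) :
  (forall i, (k <= i <= m)%nat -> u i <= v i) -> sum_n_m u k m <= sum_n_m v k m.
Proof.
  intros Huv.
  set (w i := if andb (Nat.leb k i) (Nat.leb i m) then u i else v i).
  rewrite (sum_n_m_ext_loc u w).
  - apply sum_n_m_le; intros i; unfold w.
    destruct (Nat.leb k i) eqn:E1, (Nat.leb i m) eqn:E2; simpl; try lra.
    apply Nat.leb_le in E1, E2; apply Huv; lia.
  - intros i Hi; unfold w.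
    replace (Nat.leb k i) with true by (symmetry; apply Nat.leb_le; lia).
    replace (Nat.leb i m) with true by (symmetry; apply Nat.leb_le; lia).
    reflexivity.
Qed.

Lemma sum_endpoints (h : nat -> R) (m : nat) : (2 <= m)%nat ->
  (forall i, (2 <= i <= m - 1)%nat -> h i = 0) ->
  sum_n_m h 1 m = h 1%nat + h m.
Proof.
  intros Hm Hz. destruct m as [|m]; [lia|].
  rewrite sum_1_last, sum_1_first by lia.
  rewrite (sum_n_m_ext_loc h (fun _ => zero)) by (intros i Hi; apply Hz; lia).
  rewrite sum_n_m_const_zero. unfold zero; simpl; lra.
Qed.

Lemma is_derive_sum_1 (F : nat -> R -> R) (F' : nat -> R) (t : R) (m : nat) :
  (forall i, (1 <= i <= m)%nat -> is_derive (F i) t (F' i)) ->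
  is_derive (fun s => sum_n_m (fun i => F i s) 1 m) t (sum_n_m F' 1 m).
Proof.
  induction m as [|m IH]; intros HF.
  - rewrite sum_n_m_zero by lia.
    apply is_derive_ext with (fun _ => 0).
    + intros s. rewrite sum_n_m_zero by lia. reflexivity.
    + apply (@is_derive_const R_AbsRing R_NormedModule 0 t).
  - rewrite sum_1_last.
    apply is_derive_ext with (fun s => sum_n_m (fun i => F i s) 1 m + F (S m) s).
    + intros s; rewrite sum_1_last; reflexivity.
    + apply (is_derive_plus _ _ _ _ _ (IH (fun i Hi => HF i ltac:(lia))) (HF (S m) ltac:(lia))).
Qed.

Definition prev (n i : nat) : nat := pidx n (i - 1).
Definition next (n i : nat) : nat := pidx n (i + 1).

Ltac pidx_cases :=
  unfold prev, next, pidx; repeat match goal with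
  | |- context [Nat.eqb ?a ?b] =>
      lazymatch a with context [Nat.eqb _ _] => fail | _ =>
      let E := fresh in destruct (Nat.eqb a b) eqn:E;
      [apply Nat.eqb_eq in E | apply Nat.eqb_neq in E] end end; lia.

Lemma pidx_in (n i : nat) : (1 <= i <= n)%nat -> pidx n i = i.
Proof. intros; pidx_cases. Qed.

Lemma prev_range (n i : nat) : (1 <= i <= n)%nat -> (1 <= prev n i <= n)%nat.
Proof. intros; pidx_cases. Qed.

Lemma prev_next (n i : nat) : (2 <= n)%nat -> (1 <= i <= n)%nat -> prev n (next n i) = i.
Proof. intros; pidx_cases. Qed.

Lemma next_prev (n i : nat) : (2 <= n)%nat -> (1 <= i <= n)%nat -> next n (prev n i) = i.
Proof. intros; pidx_cases. Qed.

Lemma sum_prev_shift (n : nat) (g : nat -> R) : (1 <= n)%nat ->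
  sum_n_m (fun i => g (prev n i)) 1 n = sum_n_m g 1 n.
Proof.
  intros Hn. destruct n as [|m]; [lia|].
  rewrite sum_1_first, sum_1_last by lia.
  rewrite <- (sum_n_m_S (fun i => g (prev (S m) i)) 1 m).
  rewrite (sum_n_m_ext_loc _ g) by (intros j Hj; f_equal; pidx_cases).
  replace (prev (S m) 1) with (S m) by pidx_cases. lra.
Qed.

Lemma sum_by_parts_cyclic (n : nat) (v g : nat -> R) : (2 <= n)%nat ->
  sum_n_m (fun i => v i * (g i - g (prev n i))) 1 n
  = sum_n_m (fun i => (v i - v (next n i)) * g i) 1 n.
Proof.
  intros Hn.
  assert (Hsplit : forall i, (1 <= i <= n)%nat ->
    v i * (g i - g (prev n i)) = v i * g i + - v (next n (prev n i)) * g (prev n i)).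
  { intros i Hi. rewrite (next_prev n i) by lia. ring. }
  rewrite (sum_n_m_ext_loc _ _ 1 n Hsplit).
  rewrite (sum_n_m_plus (G := R_AbelianMonoid)).
  rewrite (sum_prev_shift n (fun j => - v (next n j) * g j)) by lia.
  rewrite <- (sum_n_m_plus (G := R_AbelianMonoid)).
  apply sum_n_m_ext; intros i.
  change (v i * g i + - v (next n i) * g i = (v i - v (next n i)) * g i); ring.
Qed.

(* A derivative bounded above by [gam] makes [f - gam * id] nonincreasing,
   i.e. [f] is one-sided Lipschitz with constant [gam] (mean value theorem). *)
Lemma one_sided_lipschitz (f : R -> R) (gam u v : R) :
  (forall s, ex_derive f s) -> (forall s, Derive f s <= gam) ->
  (u - v) * (f u - f v) <= gam * (u - v) ^ 2.
Proof.
  intros Hdf Hgam.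
  destruct (MVT_gen f v u (Derive f)) as [s [_ Hs]].
  - intros z _. apply Derive_correct, Hdf.
  - intros z _. apply continuity_pt_filterlim, (ex_derive_continuous f z (Hdf z)).
  - rewrite Hs. specialize (Hgam s).
    assert (0 <= (gam - Derive f s) * (u - v) ^ 2)
      by (apply Rmult_le_pos; [lra | apply pow2_ge_0]).
    nra.
Qed.

Lemma is_derive_sq_dist (g h : R -> R) (t g' h' : R) :
  is_derive g t g' -> is_derive h t h' ->
  is_derive (fun s => Rabs (g s - h s) ^ 2) t (2 * (g t - h t) * (g' - h')).
Proof.
  intros Hg Hh.
  apply is_derive_ext with (fun s => (g s - h s) ^ 2);
    [intros s; now rewrite pow2_abs |].
  replace (2 * (g t - h t) * (g' - h')) with (INR 2 * (g' - h') * (g t - h t) ^ Nat.pred 2)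
    by (simpl; ring).
  exact (is_derive_pow (fun s => g s - h s) 2 t _ (is_derive_minus _ _ _ _ _ Hg Hh)).
Qed.

Lemma energy_derivative (n : nat) (x y : nat -> R -> R) (x' y' : nat -> R) (t : R) :
  (forall i, (1 <= i <= n)%nat -> is_derive (x i) t (x' i)) ->
  (forall i, (1 <= i <= n)%nat -> is_derive (y i) t (y' i)) ->
  is_derive (energy n x y) t
    (sum_n_m (fun i => 2 * Vd n x i t * (x' i - x' (prev n i))
                       + 2 * Vd n y i t * (y' i - y' (prev n i))) 1 n).
Proof.
  intros Hx Hy. unfold energy.
  apply (is_derive_sum_1 (fun i s => Rabs (Vd n x i s) ^ 2 + Rabs (Vd n y i s) ^ 2)).
  intros i Hi. pose proof (prev_range n i Hi) as Hp.
  apply (is_derive_plus _ _ _ _ _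
           (is_derive_sq_dist _ _ t _ _ (Hx i Hi) (Hx _ Hp))
           (is_derive_sq_dist _ _ t _ _ (Hy i Hi) (Hy _ Hp))).
Qed.

Definition lap (n : nat) (x : nat -> R -> R) (i : nat) (t : R) : R :=
  per n x (i - 1) t - 2 * x i t + per n x (i + 1) t.

Lemma lap_Vd (n : nat) (x : nat -> R -> R) (i : nat) (t : R) :
  (2 <= n)%nat -> (1 <= i <= n)%nat ->
  lap n x i t = Vd n x (next n i) t - Vd n x i t.
Proof.
  intros Hn Hi. unfold lap, Vd, per.
  fold (prev n (next n i)). rewrite (prev_next n i) by lia.
  unfold prev, next; ring.
Qed.

(* The diffusive coupling only dissipates energy: by cyclic summation by parts
   its contribution is [-2a] times a sum of squares of second differences. *)
Lemma diffusion_dissipative (n : nat) (a : R) (x : nat -> R -> R) (t : R) :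
  (2 <= n)%nat -> 0 <= a ->
  sum_n_m (fun i => 2 * Vd n x i t * (a * lap n x i t - a * lap n x (prev n i) t)) 1 n
  <= 0.
Proof.
  intros Hn Ha.
  rewrite (sum_by_parts_cyclic n (fun i => 2 * Vd n x i t) (fun i => a * lap n x i t) Hn).
  apply Rle_trans with (sum_n_m (fun _ => 0) 1 n);
    [| rewrite sum_n_m_const, Rmult_0_r; apply Rle_refl].
  apply sum_n_m_le_loc. intros i Hi.
  rewrite (lap_Vd n x i t) by lia.
  assert (0 <= a * (Vd n x (next n i) t - Vd n x i t) ^ 2)
    by (apply Rmult_le_pos; [lra | apply pow2_ge_0]).
  nra.
Qed.

(* The boundary feedback acts only at the cells [1] and [n]; after summation by
   parts its contribution is an explicit quadratic form in
   [d = x_1 - x_n] and [e = x_2 - x_{n-1}]. *)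
Lemma feedback_contribution (n : nat) (p : R) (x : nat -> R -> R) (t : R) :
  (3 <= n)%nat ->
  sum_n_m (fun i => 2 * Vd n x i t * (p * ufb n x i t - p * ufb n x (prev n i) t)) 1 n
  = 2 * p * ((x 1%nat t - x n t) * (x 2%nat t - x (n - 1)%nat t)
             - 3 * (x 1%nat t - x n t) ^ 2).
Proof.
  intros Hn.
  rewrite (sum_by_parts_cyclic n (fun i => 2 * Vd n x i t) (fun i => p * ufb n x i t))
    by lia.
  rewrite sum_endpoints; [| lia |].
  2:{ intros i Hi. unfold ufb.
      replace (Nat.eqb i 1) with false by (symmetry; apply Nat.eqb_neq; lia).
      replace (Nat.eqb i n) with false by (symmetry; apply Nat.eqb_neq; lia).
      ring. }
  assert (Hnext1 : next n 1 = 2%nat) by (apply pidx_in; lia).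
  assert (Hnextn : next n n = 1%nat) by pidx_cases.
  assert (Hufbn : ufb n x n t = x 1%nat t - x n t).
  { unfold ufb. replace (Nat.eqb n 1) with false by (symmetry; apply Nat.eqb_neq; lia).
    now rewrite Nat.eqb_refl. }
  assert (HV2 : Vd n x 2 t = x 2%nat t - x 1%nat t).
  { unfold Vd, per. change (2 - 1)%nat with 1%nat. now rewrite (pidx_in n 1) by lia. }
  assert (HVn : Vd n x n t = x n t - x (n - 1)%nat t).
  { unfold Vd, per. now rewrite (pidx_in n (n - 1)) by lia. }
  rewrite Hnext1, Hnextn, Hufbn, HV2, HVn.
  unfold Vd, per, ufb; simpl. change (pidx n 0) with n. ring.
Qed.

Lemma reaction_pointwise (b c delta gam V W F : R) :
  V * F <= gam * V ^ 2 ->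
  2 * V * (F - b * W) + 2 * W * (c * V - delta * W) + 2 * delta * (V ^ 2 + W ^ 2)
  <= 2 * ((delta + gam) * V ^ 2 + Rabs (c - b) * (V ^ 2 + W ^ 2)).
Proof.
  intros HF.
  assert (HVW : 2 * (c - b) * V * W <= Rabs (c - b) * (V ^ 2 + W ^ 2)).
  { assert (0 <= (V - W) ^ 2) by apply pow2_ge_0.
    assert (0 <= (V + W) ^ 2) by apply pow2_ge_0.
    unfold Rabs; destruct (Rcase_abs (c - b)); nra. }
  assert (0 <= Rabs (c - b) * (V ^ 2 + W ^ 2)).
  { apply Rmult_le_pos; [apply Rabs_pos | nra]. }
  nra.
Qed.

Lemma reaction_contribution (n : nat) (b c delta gam : R) (f : R -> R)
    (x y : nat -> R -> R) (t : R) :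
  (forall u v, (u - v) * (f u - f v) <= gam * (u - v) ^ 2) ->
  sum_n_m (fun i =>
      2 * Vd n x i t * (f (x i t) - f (x (prev n i) t) - b * Vd n y i t)
      + 2 * Vd n y i t * (c * Vd n x i t - delta * Vd n y i t)) 1 n
    + 2 * delta * energy n x y t
  <= 2 * sum_n_m (fun i =>
           (delta + gam) * Rabs (Vd n x i t) ^ 2
           + Rabs (c - b) * (Rabs (Vd n x i t) ^ 2 + Rabs (Vd n y i t) ^ 2)) 1 n.
Proof.
  intros Hlip. unfold energy.
  rewrite <- !(sum_n_m_mult_l (K := R_Ring)), <- (sum_n_m_plus (G := R_AbelianMonoid)).
  apply sum_n_m_le. intros i.
  pose proof (reaction_pointwise b c delta gam (Vd n x i t) (Vd n y i t) _
                (Hlip (x i t) (x (prev n i) t))) as Hi.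
  rewrite <- !(pow2_abs (Vd _ _ _ _)) in Hi.
  unfold mult, plus; simpl in *. lra.
Qed.

Theorem mainTheorem4 (n : nat) (a b c delta p lam beta gam : R)
  (f : R -> R) (x y : nat -> R -> R) :
  (4 <= n)%nat ->
  0 < a -> 0 < b -> 0 < c -> 0 < delta -> 0 < p ->
  fhn_nonlinearity f lam beta gam ->
  fhn_cnn_solution n a b c delta p f x y ->
  forall t, 0 < t ->
    Derive (energy n x y) t + 2 * delta * energy n x y t
      + 4 * p * (x n t - x 1%nat t) ^ 2
    <= 2 * sum_n_m (fun i =>
             (delta + gam) * Rabs (Vd n x i t) ^ 2
             + Rabs (c - b) * (Rabs (Vd n x i t) ^ 2 + Rabs (Vd n y i t) ^ 2))
           1 n
       + 2 * p * (x (n - 1)%nat t - x 2%nat t) ^ 2.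
Proof.
  intros Hn Ha _ _ _ Hp Hf Hsol t Ht.
  destruct Hf as (_ & _ & _ & Hdf & _ & _ & Hgam).
  pose (x' i := a * lap n x i t + f (x i t) - b * y i t + p * ufb n x i t).
  pose (y' i := c * x i t - delta * y i t).
  assert (Hder := energy_derivative n x y x' y' t
                    (fun i Hi => proj1 (Hsol i t Hi Ht)) (fun i Hi => proj2 (Hsol i t Hi Ht))).
  rewrite (is_derive_unique _ _ _ Hder).
  pose (diffusion i := 2 * Vd n x i t * (a * lap n x i t - a * lap n x (prev n i) t)).
  pose (feedback i := 2 * Vd n x i t * (p * ufb n x i t - p * ufb n x (prev n i) t)).
  pose (reaction i := 2 * Vd n x i t * (f (x i t) - f (x (prev n i) t) - b * Vd n y i t)
                      + 2 * Vd n y i t * (c * Vd n x i t - delta * Vd n y i t)).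
  assert (Hsplit : forall i,
    2 * Vd n x i t * (x' i - x' (prev n i)) + 2 * Vd n y i t * (y' i - y' (prev n i))
    = diffusion i + feedback i + reaction i).
  { intros i. unfold x', y', diffusion, feedback, reaction, Vd, per, prev. ring. }
  assert (Hsum : sum_n_m (fun i => diffusion i + feedback i + reaction i) 1 n
                 = sum_n_m diffusion 1 n + sum_n_m feedback 1 n + sum_n_m reaction 1 n).
  { rewrite !(sum_n_m_plus (G := R_AbelianMonoid)). reflexivity. }
  assert (Hdiff : sum_n_m diffusion 1 n <= 0)
    by exact (diffusion_dissipative n a x t ltac:(lia) ltac:(lra)).
  assert (Hfb := feedback_contribution n p x t ltac:(lia)).
  assert (Hreact := reaction_contribution n b c delta gam f x y t
                      (fun u v => one_sided_lipschitz f gam u v Hdf Hgam)).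
  fold feedback in Hfb. fold reaction in Hreact.
  rewrite (sum_n_m_ext _ _ 1 n Hsplit), Hsum, Hfb.
  (* What remains is [2p (d e - d^2) <= 2p e^2] for [d = x_1 - x_n], [e = x_2 - x_{n-1}]. *)
  set (d := x 1%nat t - x n t) in *. set (e := x 2%nat t - x (n - 1)%nat t) in *.
  replace ((x n t - x 1%nat t) ^ 2) with (d ^ 2) by (unfold d; ring).
  replace ((x (n - 1)%nat t - x 2%nat t) ^ 2) with (e ^ 2) by (unfold e; ring).
  assert (0 <= p * ((d - e) ^ 2 + d ^ 2 + e ^ 2))
    by (apply Rmult_le_pos; [lra | nra]).
  nra.
Qed.
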